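(* Let $A\in\mathbb{Z}^{d\times n}$, let $\prec$ be a term ordering on $\mathbb{Z}_{\ge0}^n$, let $\mathcal{R}$ be a Gröbner basis of $A$ with respect to $\prec$, and let $\mathbf{b}\in\mathbb{Z}^d$. Then there exist a matrix $A'\in\mathbb{Z}^{2d\times(n+d)}$, a term ordering $\prec'$ on $\mathbb{Z}_{\ge0}^{n+d}$ and a Gröbner basis $\mathcal{R}'$ of $A'$ with respect to $\prec'$ such that for every $N\in\mathbb{Z}_{\ge0}$ there exists $\mathbf{b}'\in\mathbb{Z}^{2d}$ with all entries at least $N$ such that the fiber graphs $G_{A',\mathbf{b}',\mathcal{R}'}$ and $G_{A,\mathbf{b},\mathcal{R}}$ are isomorphic.
   Context: For $A\in\mathbb{Z}^{d\times n}$ and $\mathbf{b}\in\mathbb{Z}^d$, the fiber is $\mathcal{F}_A(\mathbf{b})=\{\mathbf{u}\in\mathbb{Z}^n_{\ge0}:A\mathbf{u}=\mathbf{b}\}$; for $\mathcal{M}\subset\mathbb{Z}^n$ the fiber graph $G_{A,\mathbf{b},\mathcal{M}}$ is the graph on $\mathcal{F}_A(\mathbf{b})$ in which distinct $\mathbf{u},\mathbf{v}$ are adjacent iff $\mathbf{u}-\mathbf{v}\in\mathcal{M}$ or $\mathbf{v}-\mathbf{u}\in\mathcal{M}$. A term ordering on $\mathbb{Z}_{\ge0}^n$ is a total well-order compatible with addition. The toric ideal of $A$ is $I_A=\langle\mathbf{x}^{\mathbf{u}^+}-\mathbf{x}^{\mathbf{u}^-}:\mathbf{u}\in\ker(A)\cap\mathbb{Z}^n\rangle\subset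 K[x_1,\dots,x_n]$ ($\mathbf{u}^\pm$ the positive/negative parts). A Gröbner basis of $A$ with respect to $\prec$ is a finite set $\mathcal{R}\subset\ker(A)\cap\mathbb{Z}^n$ such that $\{\mathbf{x}^{\mathbf{u}^+}-\mathbf{x}^{\mathbf{u}^-}:\mathbf{u}\in\mathcal{R}\}$ is a Gröbner basis of $I_A$ with respect to $\prec$. *)

From HB Require Import structures.
From mathcomp Require Import all_boot all_order all_algebra.
From mathcomp Require Import mpoly.
Set Implicit Arguments. Unset Strict Implicit. Unset Printing Implicit Defensive.
Import Order.TTheory GRing.Theory Num.Theory.
Local Open Scope ring_scope.

Definition term_ordering (n : nat) (le : rel 'X_{1..n}) : Prop :=
  [/\ reflexive le, antisymmetric le, transitive le & total le] /\
  ((forall a b c : 'X_{1..n}, le a b -> le (a + c)%MM (b + c)%MM)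
   /\ well_founded (fun a b : 'X_{1..n} => (a != b) && le a b)).

Definition pos_part (n : nat) (u : 'cV[int]_n) : 'X_{1..n} :=
  [multinom `|Num.max (u i ord0) (0:int)|%N | i < n].
Definition neg_part (n : nat) (u : 'cV[int]_n) : 'X_{1..n} :=
  [multinom `|Num.max (- u i ord0)%R (0:int)|%N | i < n].

Definition binom (K : fieldType) (n : nat) (u : 'cV[int]_n) : {mpoly K[n]} :=
  'X_[pos_part u] - 'X_[neg_part u].

Definition in_kernel (d n : nat) (A : 'M[int]_(d, n)) (u : 'cV[int]_n) : Prop :=
  A *m u = 0.

Definition toric_ideal (K : fieldType) (d n : nat) (A : 'M[int]_(d, n))
  (f : {mpoly K[n]}) : Prop :=
  exists s : seq ({mpoly K[n]} * 'cV[int]_n),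
    (forall x, x \in s -> in_kernel A x.2) /\
    f = \sum_(x <- s) x.1 * binom K x.2.

Definition leading_monomial (K : fieldType) (n : nat) (le : rel 'X_{1..n})
  (p : {mpoly K[n]}) (m : 'X_{1..n}) : Prop :=
  m \in msupp p /\ (forall m', m' \in msupp p -> le m' m).

Definition mon_divides (n : nat) (m1 m2 : 'X_{1..n}) : Prop :=
  forall i : 'I_n, (m1 i <= m2 i)%N.

Definition is_groebner_basis (K : fieldType) (n : nat) (le : rel 'X_{1..n})
  (I : {mpoly K[n]} -> Prop) (G : {mpoly K[n]} -> Prop) : Prop :=
  (forall g, G g -> I g) /\
  (forall f, I f -> f != 0 -> forall m, leading_monomial le f m ->
     exists g mg, [/\ G g, leading_monomial le g mg & mon_divides mg m]).

Definition groebner_basis_of (K : fieldType) (d n : nat) (A : 'M[int]_(d, n))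
  (le : rel 'X_{1..n}) (R : seq 'cV[int]_n) : Prop :=
  (forall u, u \in R -> in_kernel A u) /\
  @is_groebner_basis K n le (@toric_ideal K d n A)
     (fun g => exists2 u, u \in R & g = binom K u).

Definition fiber (d n : nat) (A : 'M[int]_(d, n)) (b : 'cV[int]_d) :=
  {u : 'cV[int]_n | [forall i, 0 <= u i 0] && (A *m u == b)}.

Definition fiber_adj (d n : nat) (A : 'M[int]_(d, n)) (b : 'cV[int]_d)
  (M : seq 'cV[int]_n) (u v : fiber A b) : Prop :=
  val u != val v /\ ((val u - val v) \in M \/ (val v - val u) \in M).

Definition fiber_graphs_isomorphic (d1 n1 d2 n2 : nat)
  (A1 : 'M[int]_(d1, n1)) (b1 : 'cV[int]_d1) (M1 : seq 'cV[int]_n1)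
  (A2 : 'M[int]_(d2, n2)) (b2 : 'cV[int]_d2) (M2 : seq 'cV[int]_n2) : Prop :=
  exists f : fiber A1 b1 -> fiber A2 b2,
    bijective f /\
    (forall u v, fiber_adj M1 u v <-> fiber_adj M2 (f u) (f v)).

From HB Require Import structures.
From mathcomp Require Import all_boot all_order all_algebra.
From mathcomp Require Import mpoly.
From mathcomp Require Import zify.
Set Implicit Arguments. Unset Strict Implicit. Unset Printing Implicit Defensive.
Import Order.TTheory GRing.Theory Num.Theory.
Local Open Scope ring_scope.

(* Adjoin d slack variables y and take A' = [[A, I], [0, I]]. Its kernel is
   ker(A) x {0}, so for b' = (b + c, c) with c >= 0 the fiber of A' is
   F_A(b) x {c}, and with R' = R x {0} the two fiber graphs coincide; taking
   c = N + |b| makes every entry of b' at least N.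
   For the order compare x-parts by the given term order and break ties on the
   y-parts (a block order). If x^a y^e is the leading monomial of f in I_{A'},
   then the coefficient of y^e in f, read in K[x], lies in I_A and has leading
   monomial x^a; a leading monomial x^g of a binomial of R dividing x^a, padded
   with zeros in y, is the leading monomial of a binomial of R' and divides
   x^a y^e. *)

Section SplitMultinom.
Variables n d : nat.
Implicit Types (m : 'X_{1..n + d}) (a : 'X_{1..n}) (y : 'X_{1..d}).

Definition mnm_lsub m : 'X_{1..n} := [multinom m (lshift d i) | i < n].
Definition mnm_rsub m : 'X_{1..d} := [multinom m (rshift n j) | j < d].
Definition mnm_cat a y : 'X_{1..n + d} :=
  [multinom (match split i with inl j => a j | inr j => y j end) | i < n + d].

Lemma mnm_lsub_cat a y : mnm_lsub (mnm_cat a y) = a.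
Proof. by apply/mnmP => i; rewrite !mnmE (unsplitK (inl i)). Qed.

Lemma mnm_rsub_cat a y : mnm_rsub (mnm_cat a y) = y.
Proof. by apply/mnmP => j; rewrite !mnmE (unsplitK (inr j)). Qed.

Lemma mnm_catK m : mnm_cat (mnm_lsub m) (mnm_rsub m) = m.
Proof. by apply/mnmP => i; rewrite mnmE; case: split_ordP => j ->; rewrite mnmE. Qed.

Lemma eq_mnm_sub m1 m2 :
  (m1 == m2) = (mnm_lsub m1 == mnm_lsub m2) && (mnm_rsub m1 == mnm_rsub m2).
Proof.
apply/eqP/andP => [->|[/eqP eq_l /eqP eq_r]]; first by rewrite !eqxx.
by rewrite -(mnm_catK m1) -(mnm_catK m2) eq_l eq_r.
Qed.

Lemma eq_mnm_cat a1 y1 a2 y2 :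
  (mnm_cat a1 y1 == mnm_cat a2 y2) = (a1 == a2) && (y1 == y2).
Proof. by rewrite eq_mnm_sub !mnm_lsub_cat !mnm_rsub_cat. Qed.

Lemma mnm_lsubD m1 m2 : mnm_lsub (m1 + m2) = (mnm_lsub m1 + mnm_lsub m2)%MM.
Proof. by apply/mnmP => i; rewrite !(mnmE, mnmDE). Qed.

Lemma mnm_rsubD m1 m2 : mnm_rsub (m1 + m2) = (mnm_rsub m1 + mnm_rsub m2)%MM.
Proof. by apply/mnmP => j; rewrite !(mnmE, mnmDE). Qed.

Lemma mnm_catD a1 y1 a2 y2 :
  mnm_cat (a1 + a2)%MM (y1 + y2)%MM = (mnm_cat a1 y1 + mnm_cat a2 y2)%MM.
Proof.
by apply/eqP; rewrite eq_mnm_sub mnm_lsubD mnm_rsubD !mnm_lsub_cat !mnm_rsub_cat !eqxx.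
Qed.

Lemma mon_divides_cat a1 y1 a2 y2 :
  mon_divides a1 a2 -> mon_divides y1 y2 ->
  mon_divides (mnm_cat a1 y1) (mnm_cat a2 y2).
Proof. by move=> le_a le_y i; rewrite !mnmE; case: split. Qed.

End SplitMultinom.

Lemma mon_divides0 n (a : 'X_{1..n}) : mon_divides 0%MM a.
Proof. by move=> i; rewrite mnm0E. Qed.

Lemma term_ordering_mnm n : term_ordering (<=%O : rel 'X_{1..n}).
Proof.
split; first by split; [exact: lexx|exact: le_anti|exact: le_trans|exact: le_total].
split=> [a b c|a]; first by rewrite lemc_add2l.
elim: (ltom_wf a) => {}a _ IH; constructor => b; rewrite -lt_neqAle; exact: IH.
Qed.

Section BlockOrder.
Variables (n d : nat) (le1 : rel 'X_{1..n}) (le2 : rel 'X_{1..d}).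
Hypotheses (le1_term : term_ordering le1) (le2_term : term_ordering le2).

Definition block_order : rel 'X_{1..n + d} := fun m1 m2 =>
  if mnm_lsub m1 == mnm_lsub m2 then le2 (mnm_rsub m1) (mnm_rsub m2)
  else le1 (mnm_lsub m1) (mnm_lsub m2).

Lemma block_order_trans : transitive block_order.
Proof.
have [[_ anti1 trans1 _] _] := le1_term; have [[_ _ trans2 _] _] := le2_term.
move=> m2 m1 m3; rewrite /block_order.
case: (eqVneq (mnm_lsub m1) (mnm_lsub m2)) => [-> | ne12].
  by case: eqP => _; [exact: trans2|].
case: (eqVneq (mnm_lsub m2) (mnm_lsub m3)) => [<- | ne23]; first by rewrite (negPf ne12).
case: eqP => [eq13 le12 le23 | _]; last exact: trans1.
by rewrite -eq13 in le23 ne23; case/eqP: ne23; apply: anti1; rewrite le23 le12.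
Qed.

Lemma block_order_wf :
  well_founded (fun m1 m2 : 'X_{1..n + d} => (m1 != m2) && block_order m1 m2).
Proof.
have [_ [_ wf1]] := le1_term; have [_ [_ wf2]] := le2_term.
suff Acc_cat a y : Acc (fun m1 m2 => (m1 != m2) && block_order m1 m2) (mnm_cat a y).
  by move=> m; rewrite -(mnm_catK m).
elim: (wf1 a) y => {}a _ IHa y; elim: (wf2 y) => {}y _ IHy.
constructor => m; rewrite -(mnm_catK m) eq_mnm_cat /block_order.
rewrite !mnm_lsub_cat !mnm_rsub_cat.
case: eqP => [-> | /eqP ne_a /= le_a]; last by apply: IHa; rewrite ne_a.
by move=> /= lt_y; apply: IHy.
Qed.

Lemma block_order_term : term_ordering block_order.
Proof.
have [[refl1 anti1 _ total1] [add1 _]] := le1_term.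
have [[refl2 anti2 _ total2] [add2 _]] := le2_term.
split; [split|split].
- by move=> m; rewrite /block_order eqxx refl2.
- move=> m1 m2 /andP[]; rewrite /block_order eq_sym.
  case: eqP => [eq_l le12 le21 | ne_l le12 le21].
    by apply/eqP; rewrite eq_mnm_sub eq_l eqxx /=; apply/eqP/anti2; rewrite le12 le21.
  by exfalso; apply/ne_l/anti1; rewrite le21 le12.
- exact: block_order_trans.
- move=> m1 m2; rewrite /block_order eq_sym.
  by case: eqP => _; [exact: total2|exact: total1].
- move=> m1 m2 m3; rewrite /block_order !mnm_lsubD !mnm_rsubD.
  case: eqP => [-> | ne_l]; first by rewrite eqxx; apply: add2.
  by case: eqP => [/addIm | _] //; apply: add1.
- exact: block_order_wf.
Qed.

End BlockOrder.

Section ToricIdeal.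
Variables (K : fieldType) (d n : nat) (A : 'M[int]_(d, n)).

Lemma toric_ideal0 : toric_ideal A (0 : {mpoly K[n]}).
Proof. by exists [::]; rewrite big_nil. Qed.

Lemma toric_idealD (p q : {mpoly K[n]}) :
  toric_ideal A p -> toric_ideal A q -> toric_ideal A (p + q).
Proof.
move=> [s [ker_s ->]] [t [ker_t ->]]; exists (s ++ t); split; last by rewrite big_cat.
by move=> x; rewrite mem_cat => /orP[/ker_s|/ker_t].
Qed.

Lemma toric_idealZ c (p : {mpoly K[n]}) : toric_ideal A p -> toric_ideal A (c *: p).
Proof.
move=> [s [ker_s ->]]; exists [seq (c *: x.1, x.2) | x <- s]; split.
  by move=> x /mapP[y /ker_s ker_y ->].
by rewrite big_map scaler_sumr; apply: eq_bigr => x _; rewrite scalerAl.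
Qed.

Lemma toric_ideal_mul_binom (h : {mpoly K[n]}) u :
  in_kernel A u -> toric_ideal A (h * binom K u).
Proof.
by move=> ker_u; exists [:: (h, u)]; rewrite big_seq1; split => // x /[!inE] /eqP ->.
Qed.

Lemma toric_ideal_sum (I : eqType) (r : seq I) (F : I -> {mpoly K[n]}) :
  (forall i, i \in r -> toric_ideal A (F i)) -> toric_ideal A (\sum_(i <- r) F i).
Proof.
elim: r => [|x r IH] toric_F; first by rewrite big_nil; exact: toric_ideal0.
rewrite big_cons; apply: toric_idealD; first by apply: toric_F; rewrite mem_head.
by apply: IH => i r_i; apply: toric_F; rewrite in_cons r_i orbT.
Qed.

End ToricIdeal.

Section Slice.
Variables (K : fieldType) (n d : nat).
Implicit Types (f : {mpoly K[n + d]}) (y : 'X_{1..d}).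

Definition mslice y f : {mpoly K[n]} :=
  \sum_(m <- msupp f | mnm_rsub m == y) f@_m *: 'X_[mnm_lsub m].

Lemma mcoeff_mslice y f a : (mslice y f)@_a = f@_(mnm_cat a y).
Proof.
rewrite /mslice raddf_sum [in RHS](mpolyE f) raddf_sum /= big_mkcond /=.
apply: eq_bigr => m _; rewrite !mcoeffZ !mcoeffX -[in m == _](mnm_catK m) eq_mnm_cat andbC.
by case: (mnm_rsub m == y); rewrite ?mulr0.
Qed.

Lemma mslice_sum y (I : Type) (r : seq I) (F : I -> {mpoly K[n + d]}) :
  mslice y (\sum_(i <- r) F i) = \sum_(i <- r) mslice y (F i).
Proof.
apply/mpolyP => a; rewrite mcoeff_mslice !raddf_sum.
by apply: eq_bigr => i _ /=; rewrite mcoeff_mslice.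
Qed.

Lemma msliceZ y c f : mslice y (c *: f) = c *: mslice y f.
Proof. by apply/mpolyP => a; rewrite mcoeffZ !mcoeff_mslice mcoeffZ. Qed.

End Slice.

Section PaddedBinomial.
Variables (K : fieldType) (n d : nat).
Local Notation pad u := (col_mx u (0 : 'cV[int]_d)).

Lemma pos_part_pad (u : 'cV[int]_n) : pos_part (pad u) = mnm_cat (pos_part u) 0%MM.
Proof.
apply/mnmP => i; rewrite !mnmE.
by case: split_ordP => j ->; rewrite ?col_mxEu ?col_mxEd ?mnmE ?mxE.
Qed.

Lemma neg_part_pad (u : 'cV[int]_n) : neg_part (pad u) = mnm_cat (neg_part u) 0%MM.
Proof.
apply/mnmP => i; rewrite !mnmE.
by case: split_ordP => j ->; rewrite ?col_mxEu ?col_mxEd ?mnmE ?mxE.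
Qed.

Lemma mcoeff_binom_pad (u : 'cV[int]_n) a (y : 'X_{1..d}) :
  (binom K (pad u))@_(mnm_cat a y) = (y == 0%MM)%:R * (binom K u)@_a.
Proof.
rewrite /binom pos_part_pad neg_part_pad !mcoeffB !mcoeffX !eq_mnm_cat.
rewrite ![(0%MM == y)]eq_sym.
by case: (y == 0%MM); rewrite ?andbT ?andbF ?mul1r ?mul0r ?subrr.
Qed.

Lemma mslice_mulX_binom_pad (u : 'cV[int]_n) (y : 'X_{1..d}) m :
  mslice y ('X_[m] * binom K (pad u)) =
  (mnm_rsub m == y)%:R *: ('X_[mnm_lsub m] * binom K u).
Proof.
apply/mpolyP => a; rewrite mcoeff_mslice mcoeffZ /binom pos_part_pad neg_part_pad.
rewrite !mulrBr -!mpolyXD !mcoeffB !mcoeffX -(mnm_catK m) -!mnm_catD !eq_mnm_cat.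
rewrite mnm_lsub_cat mnm_rsub_cat !addm0.
by case: (_ == y); rewrite ?andbT ?andbF ?mul1r ?mul0r ?subrr.
Qed.

Lemma toric_ideal_mslice dA (A : 'M[int]_(dA, n)) (u : 'cV[int]_n) y
    (h : {mpoly K[n + d]}) :
  in_kernel A u -> toric_ideal A (mslice y (h * binom K (pad u))).
Proof.
move=> ker_u; rewrite [h]mpolyE mulr_suml mslice_sum; apply: toric_ideal_sum => m _.
rewrite -scalerAl msliceZ mslice_mulX_binom_pad scalerA.
by apply: toric_idealZ; apply: toric_ideal_mul_binom.
Qed.

End PaddedBinomial.

Section LeadingMonomial.
Variables (K : fieldType) (n d : nat) (le1 : rel 'X_{1..n}) (le2 : rel 'X_{1..d}).

Lemma leading_monomial_mslice (f : {mpoly K[n + d]}) m :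
  reflexive le1 -> leading_monomial (block_order le1 le2) f m ->
  leading_monomial le1 (mslice (mnm_rsub m) f) (mnm_lsub m).
Proof.
move=> refl1 [f_m max_m]; split.
  by rewrite mcoeff_msupp mcoeff_mslice mnm_catK -mcoeff_msupp.
move=> a; rewrite mcoeff_msupp mcoeff_mslice -mcoeff_msupp => /max_m.
by rewrite /block_order mnm_lsub_cat; case: eqP => [-> _ | //]; apply: refl1.
Qed.

Lemma leading_monomial_binom_pad (u : 'cV[int]_n) a :
  reflexive le2 -> leading_monomial le1 (binom K u) a ->
  leading_monomial (block_order le1 le2)
    (binom K (col_mx u (0 : 'cV[int]_d))) (mnm_cat a 0%MM).
Proof.
move=> refl2 [u_a max_a]; split.
  by rewrite mcoeff_msupp mcoeff_binom_pad eqxx mul1r -mcoeff_msupp.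
move=> m; rewrite -(mnm_catK m) mcoeff_msupp mcoeff_binom_pad.
case: (eqVneq (mnm_rsub m) 0%MM) => [-> | _]; last by rewrite mul0r eqxx.
rewrite mul1r -mcoeff_msupp => /max_a le_a.
by rewrite /block_order !mnm_lsub_cat !mnm_rsub_cat; case: eqP => _; [apply: refl2|].
Qed.

End LeadingMonomial.

Lemma castmx_mulmx (R : pzRingType) m1 m2 p q (e : m1 = m2)
    (M : 'M[R]_(m1, p)) (N : 'M[R]_(p, q)) :
  castmx (e, erefl) M *m N = castmx (e, erefl) (M *m N).
Proof. by case: m2 / e; rewrite !castmx_id. Qed.

Definition addnn_mul2 (d : nat) : (d + d = 2 * d)%N := etrans (addnn d) (esym (mul2n d)).

Section LiftMatrix.
Variables (d n : nat) (A : 'M[int]_(d, n)).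

Definition lift_mx : 'M[int]_(2 * d, n + d) :=
  castmx (addnn_mul2 d, erefl) (block_mx A 1%:M 0 1%:M).

Definition lift_rhs (b c : 'cV[int]_d) : 'cV[int]_(2 * d) :=
  castmx (addnn_mul2 d, erefl) (col_mx (b + c) c).

Lemma lift_mx_mulE (v : 'cV[int]_(n + d)) b c :
  (lift_mx *m v == lift_rhs b c) = (A *m usubmx v == b) && (dsubmx v == c).
Proof.
rewrite /lift_mx /lift_rhs castmx_mulmx (inj_eq (can_inj (castmxK _ _))).
rewrite -[v in block_mx _ _ _ _ *m v]vsubmxK mul_block_col !mul1mx mul0mx add0r.
apply/eqP/andP => [/eq_col_mx[eq_b eq_c] | [/eqP <- /eqP <-] //].
by rewrite eq_c in eq_b; rewrite (addIr _ eq_b) eq_c !eqxx.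
Qed.

Lemma in_kernel_lift_mx (v : 'cV[int]_(n + d)) :
  in_kernel lift_mx v <-> in_kernel A (usubmx v) /\ dsubmx v = 0.
Proof.
have rhs00 : lift_rhs 0 0 = 0.
  by apply/matrixP => i j; rewrite castmxE !mxE; case: split => k; rewrite !mxE ?addr0.
rewrite /in_kernel -rhs00; split => [/eqP | [ker_u dsub0]].
  by rewrite lift_mx_mulE => /andP[/eqP -> /eqP ->].
by apply/eqP; rewrite lift_mx_mulE ker_u dsub0 !eqxx.
Qed.

Lemma groebner_basis_lift (K : fieldType) (le1 : rel 'X_{1..n}) (le2 : rel 'X_{1..d})
    (R : seq 'cV[int]_n) :
  reflexive le1 -> reflexive le2 -> groebner_basis_of K A le1 R ->
  groebner_basis_of K lift_mx (block_order le1 le2) [seq col_mx u 0 | u <- R].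
Proof.
move=> refl1 refl2 [ker_R [_ lead_R]].
have ker_pad u : u \in R -> in_kernel lift_mx (col_mx u 0).
  by move=> /ker_R ker_u; apply/in_kernel_lift_mx; rewrite col_mxKu col_mxKd.
split; first by move=> _ /mapP[u R_u ->]; apply: ker_pad.
split.
  move=> _ [_ /mapP[u R_u ->] ->]; exists [:: (1, col_mx u 0)].
  by rewrite big_seq1 mul1r; split => // x /[!inE] /eqP ->; apply: ker_pad.
move=> f toric_f f_neq0 m lead_m.
have toric_slice : toric_ideal A (mslice (mnm_rsub m) f).
  case: toric_f => s [ker_s ->]; rewrite mslice_sum; apply: toric_ideal_sum.
  move=> x /ker_s /in_kernel_lift_mx[ker_u dsub0].
  by rewrite -[x.2]vsubmxK dsub0; apply: toric_ideal_mslice.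
have lead_slice := leading_monomial_mslice refl1 lead_m.
have slice_neq0 : mslice (mnm_rsub m) f != 0.
  by apply/eqP => slice0; move: lead_slice.1; rewrite slice0 mcoeff_msupp mcoeff0 eqxx.
have [_ [mg [[u R_u ->] lead_u div_u]]] := lead_R _ toric_slice slice_neq0 _ lead_slice.
exists (binom K (col_mx u 0)), (mnm_cat mg 0%MM); split.
- by exists (col_mx u 0) => //; apply: map_f.
- exact: leading_monomial_binom_pad.
- by rewrite -(mnm_catK m); apply: mon_divides_cat => //; apply: mon_divides0.
Qed.

End LiftMatrix.

Section LiftFiber.
Variables (d n : nat) (A : 'M[int]_(d, n)) (b c : 'cV[int]_d).
Hypothesis c_ge0 : forall i, 0 <= c i 0.
Local Notation fiber_lift := (fiber (lift_mx A) (lift_rhs b c)).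

Lemma fiber_lift_val (v : fiber_lift) : val v = col_mx (usubmx (val v)) c.
Proof.
by case: v => v /= /andP[_]; rewrite lift_mx_mulE => /andP[_ /eqP <-]; rewrite vsubmxK.
Qed.

Lemma fiber_lift_usubP (v : fiber_lift) :
  [forall i, 0 <= usubmx (val v) i 0] && (A *m usubmx (val v) == b).
Proof.
case: v => v /= /andP[/forallP v_ge0]; rewrite lift_mx_mulE => /andP[-> _].
by rewrite andbT; apply/forallP => i; rewrite mxE.
Qed.

Lemma fiber_padP (u : fiber A b) :
  [forall i, 0 <= col_mx (val u) c i 0] && (lift_mx A *m col_mx (val u) c == lift_rhs b c).
Proof.
case: u => u /= /andP[/forallP u_ge0 Au].
rewrite lift_mx_mulE col_mxKu col_mxKd Au eqxx !andbT; apply/forallP => i.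
by rewrite -(splitK i); case: (split i) => j; rewrite ?col_mxEu ?col_mxEd.
Qed.

Definition fiber_drop (v : fiber_lift) : fiber A b :=
  exist _ (usubmx (val v)) (fiber_lift_usubP v).

Definition fiber_pad (u : fiber A b) : fiber_lift :=
  exist _ (col_mx (val u) c) (fiber_padP u).

Lemma fiber_dropK : cancel fiber_drop fiber_pad.
Proof. by move=> v; apply: val_inj; rewrite /= -fiber_lift_val. Qed.

Lemma fiber_padK : cancel fiber_pad fiber_drop.
Proof. by move=> u; apply: val_inj; rewrite /= col_mxKu. Qed.

Lemma fiber_adj_drop (R : seq 'cV[int]_n) (v w : fiber_lift) :
  fiber_adj [seq col_mx u 0 | u <- R] v w <-> fiber_adj R (fiber_drop v) (fiber_drop w).
Proof.
have col_mxl_inj (y : 'cV[int]_d) : injective (fun u : 'cV[int]_n => col_mx u y).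
  by move=> u1 u2 /eq_col_mx[].
rewrite /fiber_adj /= (fiber_lift_val v) (fiber_lift_val w) !col_mxKu.
rewrite !opp_col_mx !add_col_mx subrr !(mem_map (col_mxl_inj 0)).
by rewrite (inj_eq (col_mxl_inj c)).
Qed.

Lemma fiber_graphs_isomorphic_lift (R : seq 'cV[int]_n) :
  fiber_graphs_isomorphic (lift_mx A) (lift_rhs b c) [seq col_mx u 0 | u <- R] A b R.
Proof.
exists fiber_drop; split; last exact: fiber_adj_drop.
by exists fiber_pad; [exact: fiber_dropK | exact: fiber_padK].
Qed.

End LiftFiber.

Theorem theorem1 (K : fieldType) (d n : nat) (A : 'M[int]_(d, n))
  (le : rel 'X_{1..n}) (R : seq 'cV[int]_n) (b : 'cV[int]_d) :
  term_ordering le -> groebner_basis_of K A le R ->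
  exists (A' : 'M[int]_(2 * d, n + d)) (le' : rel 'X_{1..n + d})
         (R' : seq 'cV[int]_(n + d)),
    [/\ term_ordering le', groebner_basis_of K A' le' R' &
        forall N : nat, exists b' : 'cV[int]_(2 * d),
          (forall i, (N%:Z <= b' i 0)%R) /\
          fiber_graphs_isomorphic A' b' R' A b R].
Proof.
move=> le_term gb_R; have [[le_refl _ _ _] _] := le_term.
exists (lift_mx A), (block_order le <=%O), [seq col_mx u 0 | u <- R]; split.
- exact: block_order_term (term_ordering_mnm d).
- exact: groebner_basis_lift.
move=> N; pose c : 'cV[int]_d := \col_i (N%:Z + `|b i 0|).
have c_ge0 i : 0 <= c i 0 by rewrite mxE; lia.
exists (lift_rhs b c); split; last exact: fiber_graphs_isomorphic_lift.
move=> i; rewrite castmxE [cast_ord _ 0](_ : _ = 0); last exact: val_inj.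
have N_le (x : int) : N%:Z <= x + (N%:Z + `|x|) by lia.
rewrite -[cast_ord _ i]splitK; case: split => j.
  by rewrite col_mxEu !mxE N_le.
by rewrite col_mxEd mxE lerDl.
Qed.
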